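(* Let $\alpha,\beta,\gamma\in\mathbf S^2$ and put $A=\mathcal R_\gamma^\pi\circ\mathcal R_\beta^\pi\circ\mathcal R_\alpha^\pi$ and $B=\mathcal R_\alpha^\pi\circ\mathcal R_\gamma^\pi\circ\mathcal R_\beta^\pi$. Suppose $A$ is not the identity. Then $A$ and $B$ have the same axis of rotation if and only if one of the following holds: (i) $\mathbf R\beta=\mathbf R\gamma$; (ii) $\langle\gamma,\beta\rangle_E=0$ and $\det_3(\alpha\beta\gamma)^2\neq1$; (iii) $\langle\alpha,\beta\rangle_E=0=\langle\alpha,\gamma\rangle_E$ and $\langle\gamma,\beta\rangle_E\neq0$. Moreover, if $b\in\mathbf S^2$ lies on this common axis and one sets $c=\mathcal R_\alpha^\pi(b)$ and $a=\mathcal R_\gamma^\pi(b)$, then in case (i) $b=c=\pm\alpha$; in case (ii) $c=-b$; and in case (iii) $-a=b=c=\pm\alpha$.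
   Context: For a nonzero $v\in\mathbf R^3$ and $\phi\in\mathbf R$, $\mathcal R_v^\phi$ denotes the rotation of $\mathbf R^3$ by angle $\phi$ about the axis $\mathbf Rv$; $\mathcal R_v^\pi$ is the half-turn about $\mathbf Rv$. $\langle\cdot,\cdot\rangle_E$ is the Euclidean inner product, $\mathbf S^2$ the unit sphere, $\det_3(\alpha\beta\gamma)$ the determinant with columns $\alpha,\beta,\gamma$. The axis of a rotation different from the identity is its (one-dimensional) fixed line. *)

From Stdlib Require Import Reals Lra.
Open Scope R_scope.

Record vec3 : Type := V3 { v1 : R; v2 : R; v3 : R }.

Definition vadd (u w : vec3) : vec3 := V3 (v1 u + v1 w) (v2 u + v2 w) (v3 u + v3 w).
Definition vscale (t : R) (u : vec3) : vec3 := V3 (t * v1 u) (t * v2 u) (t * v3 u).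
Definition vopp (u : vec3) : vec3 := vscale (-1) u.

Definition dotE (u w : vec3) : R := v1 u * v1 w + v2 u * v2 w + v3 u * v3 w.

Definition on_S2 (u : vec3) : Prop := dotE u u = 1.

Definition det3 (a b c : vec3) : R :=
  v1 a * (v2 b * v3 c - v3 b * v2 c)
  - v1 b * (v2 a * v3 c - v3 a * v2 c)
  + v1 c * (v2 a * v3 b - v3 a * v2 b).

Definition on_line (v x : vec3) : Prop := exists t : R, x = vscale t v.
Definition same_line (u w : vec3) : Prop := forall x, on_line u x <-> on_line w x.

(* Half-turn R_v^pi about the axis R v, for v a unit vector:
   x |-> 2 <v,x> v - x  (rotation by pi about R v). *)
Definition halfturn (v : vec3) (x : vec3) : vec3 :=
  vadd (vscale (2 * dotE v x) v) (vopp x).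

(* Two rotations (different from the identity) have the same axis iff their
   fixed lines coincide. *)
Definition same_axis (f g : vec3 -> vec3) : Prop :=
  forall x, f x = x <-> g x = x.

From Stdlib Require Import Reals Lra Psatz.
Open Scope R_scope.

(* With the homogeneous half-turn x |-> 2<u,x>u - <u,u>x, the
   composite A = R_gamma o R_beta o R_alpha is, by a polynomial identity, the
   Rodrigues map x |-> (s^2-|v|^2) x + 2<v,x> v + 2 s (v x x) attached to the
   quaternion product gamma.beta.alpha = s + v, where s = det3(alpha,beta,gamma)
   and v = -<gamma,beta> alpha + (gamma x beta) x alpha, with s^2 + |v|^2 = 1.
   Since A is not the identity, v <> 0, and the fixed points of A are exactly
   the line R v.  As R_alpha is an involution, B = R_alpha o A o R_alpha, so
   the fixed line of B is R_alpha(R v); hence A and B share their axis iff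
   R_alpha maps v into R v, i.e. iff <alpha,v> = 0 or alpha x v = 0.  The
   identities <alpha,v> = -<gamma,beta> and
   alpha x v = gamma x beta - <alpha, gamma x beta> alpha turn this into
   "<gamma,beta> = 0 or gamma x beta is parallel to alpha", which is a
   reformulation of (i) \/ (ii) \/ (iii).  Points b of the axis are multiples
   of v, which yields the description of c = R_alpha(b) and a = R_gamma(b). *)

Definition vzero : vec3 := V3 0 0 0.

Definition cross (u w : vec3) : vec3 :=
  V3 (v2 u * v3 w - v3 u * v2 w) (v3 u * v1 w - v1 u * v3 w) (v1 u * v2 w - v2 u * v1 w).

(* Polynomial identities between vectors: keep only the vectors the goal
   mentions, split them into coordinates and normalize with [ring]. *)
Ltac vec_ring :=
  repeat match goal with H : _ |- _ => clear H end;
  repeat match goal with v : vec3 |- _ => revert v end;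
  repeat intros [? ? ?];
  unfold halfturn, vopp, det3, cross, vzero, vadd, vscale, dotE; simpl;
  lazymatch goal with |- @eq vec3 _ _ => f_equal | _ => idtac end; ring.

Lemma vscale_1 (x : vec3) : vscale 1 x = x.
Proof. vec_ring. Qed.

Lemma vscale_vscale (s t : R) (x : vec3) : vscale s (vscale t x) = vscale (s * t) x.
Proof. vec_ring. Qed.

Lemma vopp_vopp (x : vec3) : vopp (vopp x) = x.
Proof. vec_ring. Qed.

Lemma dotE_comm (x y : vec3) : dotE x y = dotE y x.
Proof. vec_ring. Qed.

Lemma dotE_scale_r (x y : vec3) (t : R) : dotE x (vscale t y) = t * dotE x y.
Proof. vec_ring. Qed.

Lemma cross_anticomm (x y : vec3) : cross x y = vscale (-1) (cross y x).
Proof. vec_ring. Qed.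

Lemma cross_scale_l (x y : vec3) (t : R) : cross (vscale t x) y = vscale t (cross x y).
Proof. vec_ring. Qed.

Lemma cross_scale_r (x y : vec3) (t : R) : cross x (vscale t y) = vscale t (cross x y).
Proof. vec_ring. Qed.

Lemma cross_self (x : vec3) : cross x x = vzero.
Proof. vec_ring. Qed.

Lemma cross_zero_r (x : vec3) : cross x vzero = vzero.
Proof. vec_ring. Qed.

Lemma dotE_cross_l (x y : vec3) : dotE (cross x y) x = 0.
Proof. vec_ring. Qed.

Lemma dotE_cross_r (x y : vec3) : dotE (cross x y) y = 0.
Proof. vec_ring. Qed.

Lemma cross_cross (x y z : vec3) :
  cross x (cross y z) = vadd (vscale (dotE x z) y) (vscale (- dotE x y) z).
Proof. vec_ring. Qed.

Lemma lagrange_identity (x y : vec3) :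
  dotE (cross x y) (cross x y) = dotE x x * dotE y y - dotE x y ^ 2.
Proof. vec_ring. Qed.

Lemma norm_zero (x : vec3) : dotE x x = 0 -> x = vzero.
Proof.
  destruct x as [p q r]; unfold dotE, vzero; simpl; intro h.
  assert (p = 0) by nra; assert (q = 0) by nra; assert (r = 0) by nra; subst; reflexivity.
Qed.

Lemma norm_pos (x : vec3) : x <> vzero -> 0 < dotE x x.
Proof.
  intro hx. destruct (Rle_lt_or_eq_dec 0 (dotE x x)) as [h | h]; [| exact h |].
  - destruct x as [p q r]; unfold dotE; simpl; nra.
  - exfalso; apply hx, norm_zero; auto.
Qed.

Lemma vadd_scale_cancel (x w : vec3) (t : R) : t <> 0 -> vadd x (vscale t w) = x -> w = vzero.
Proof.
  intros ht h. destruct x, w; unfold vadd, vscale, vzero in *; simpl in *.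
  injection h as h1 h2 h3. f_equal; nra.
Qed.

Lemma vadd_scale_zero (w y : vec3) (t : R) : vadd w (vscale t y) = vzero -> w = vscale (- t) y.
Proof.
  intro h. destruct w, y; unfold vadd, vscale, vzero in *; simpl in *.
  injection h as h1 h2 h3. f_equal; lra.
Qed.

(* If v <> 0 and v x x = 0, then x is the multiple (<v,x>/|v|^2) v of v,
   by the double cross product expansion of v x (v x x) = 0. *)
Lemma cross_zero_parallel (v x : vec3) :
  v <> vzero -> cross v x = vzero -> x = vscale (dotE v x / dotE v v) v.
Proof.
  intros hv h. pose proof (norm_pos v hv) as hpos.
  pose proof (cross_cross v v x) as E. rewrite h, cross_zero_r in E.
  revert E hpos. destruct v, x; unfold vadd, vscale, vzero, dotE; simpl.
  intros E hpos. injection E as e1 e2 e3. f_equal; field_simplify_eq; nra.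
Qed.

Lemma on_line_trans (u v x : vec3) : on_line u v -> on_line v x -> on_line u x.
Proof.
  intros [s ->] [t ->]. exists (t * s). apply vscale_vscale.
Qed.

Lemma on_line_of_cross_zero (v x : vec3) : v <> vzero -> cross v x = vzero -> on_line v x.
Proof. intros hv h. eexists. exact (cross_zero_parallel v x hv h). Qed.

Lemma same_line_iff_cross (u w : vec3) :
  u <> vzero -> w <> vzero -> same_line u w <-> cross w u = vzero.
Proof.
  intros hu hw. split.
  - intro hl. destruct (proj2 (hl w)) as [t ->].
    + exists 1. symmetry. apply vscale_1.
    + rewrite cross_scale_l, cross_self. vec_ring.
  - intro h.
    assert (h' : cross u w = vzero) by (rewrite cross_anticomm, h; vec_ring).
    intro x. split; intro hx.
    + exact (on_line_trans w u x (on_line_of_cross_zero w u hw h) hx).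
    + exact (on_line_trans u w x (on_line_of_cross_zero u w hu h') hx).
Qed.

Lemma unit_nonzero (u : vec3) : on_S2 u -> u <> vzero.
Proof. intros h ->. unfold on_S2, dotE, vzero in h; simpl in h. lra. Qed.

Lemma unit_on_line (u x : vec3) : on_S2 u -> on_S2 x -> on_line u x -> x = u \/ x = vopp u.
Proof.
  intros hu hx [t ->]. unfold on_S2 in *.
  rewrite dotE_scale_r, dotE_comm, dotE_scale_r, hu in hx.
  assert (t = 1 \/ t = -1) as [-> | ->] by nra.
  - left. apply vscale_1.
  - right. reflexivity.
Qed.

Lemma halfturn_halfturn (u x : vec3) :
  halfturn u (halfturn u x) = vadd x (vscale (4 * dotE u x * (dotE u u - 1)) u).
Proof. vec_ring. Qed.

Lemma halfturn_involutive (u x : vec3) : on_S2 u -> halfturn u (halfturn u x) = x.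
Proof.
  intro hu. unfold on_S2 in hu. rewrite halfturn_halfturn, hu. vec_ring.
Qed.

Lemma halfturn_scale (u x : vec3) (t : R) : halfturn u (vscale t x) = vscale t (halfturn u x).
Proof. vec_ring. Qed.

Lemma halfturn_perp (u x : vec3) : dotE u x = 0 -> halfturn u x = vopp x.
Proof. intro h. unfold halfturn. rewrite h. vec_ring. Qed.

Lemma halfturn_on_axis (u x : vec3) : on_S2 u -> on_line u x -> halfturn u x = x.
Proof.
  intros hu [t ->]. unfold on_S2 in hu. unfold halfturn.
  rewrite dotE_scale_r, hu. vec_ring.
Qed.

(* A half-turn about a unit u maps the line R v into itself iff v is
   orthogonal or parallel to u: from R_u v = t v one gets
   2<u,v> (u x v) = (R_u v + v) x v = 0. *)
Lemma halfturn_stable_line (u v : vec3) :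
  on_S2 u -> v <> vzero -> on_line v (halfturn u v) <-> dotE u v = 0 \/ cross u v = vzero.
Proof.
  intros hu hv. split.
  - intros [t ht].
    assert (E : vscale (2 * dotE u v) (cross u v) = vzero).
    { replace (vscale (2 * dotE u v) (cross u v)) with (cross (vadd (halfturn u v) v) v) by vec_ring.
      rewrite ht. vec_ring. }
    destruct (Req_dec (dotE u v) 0) as [h0 | h0]; [left; exact h0 | right].
    rewrite <- (vscale_1 (cross u v)).
    replace 1 with (/ (2 * dotE u v) * (2 * dotE u v)) by (field; exact h0).
    rewrite <- vscale_vscale, E. vec_ring.
  - intros [h | h].
    + exists (-1). apply halfturn_perp, h.
    + exists 1. rewrite vscale_1. apply halfturn_on_axis; [exact hu |].
      apply on_line_of_cross_zero; [apply unit_nonzero, hu | exact h].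
Qed.

(* Homogeneous half-turn: it agrees with [halfturn u] when |u| = 1, and has
   the advantage that compositions are polynomial identities in all vectors. *)
Definition halfturn_hom (u x : vec3) : vec3 :=
  vadd (vscale (2 * dotE u x) u) (vscale (- dotE u u) x).

(* Rodrigues' form of the rotation attached to the quaternion s + v. *)
Definition rodrigues (s : R) (v x : vec3) : vec3 :=
  vadd (vadd (vscale (s ^ 2 - dotE v v) x) (vscale (2 * dotE v x) v))
       (vscale (2 * s) (cross v x)).

(* Vector part of the quaternion product c.b.a of pure quaternions; its
   scalar part is det3 a b c. *)
Definition quat_vec (a b c : vec3) : vec3 :=
  vadd (vscale (- dotE c b) a) (cross (cross c b) a).

Lemma halfturn_hom_unit (u x : vec3) : on_S2 u -> halfturn u x = halfturn_hom u x.
Proof. intro hu. unfold on_S2 in hu. unfold halfturn_hom. rewrite hu. vec_ring. Qed.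

Lemma halfturn_hom_triple (a b c x : vec3) :
  halfturn_hom c (halfturn_hom b (halfturn_hom a x)) = rodrigues (det3 a b c) (quat_vec a b c) x.
Proof. unfold halfturn_hom, rodrigues, quat_vec. vec_ring. Qed.

(* Multiplicativity of the quaternion norm. *)
Lemma quat_norm (a b c : vec3) :
  det3 a b c ^ 2 + dotE (quat_vec a b c) (quat_vec a b c) = dotE a a * dotE b b * dotE c c.
Proof. unfold quat_vec. vec_ring. Qed.

Lemma dotE_quat_vec (a b c : vec3) : dotE a (quat_vec a b c) = - dotE c b * dotE a a.
Proof. unfold quat_vec. vec_ring. Qed.

Lemma cross_quat_vec (a b c : vec3) :
  cross a (quat_vec a b c) = vadd (vscale (dotE a a) (cross c b)) (vscale (- dotE a (cross c b)) a).
Proof. unfold quat_vec. vec_ring. Qed.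

Lemma quat_vec_parallel (a b c : vec3) (k : R) :
  cross c b = vscale k a -> quat_vec a b c = vscale (- dotE c b) a.
Proof. intro h. unfold quat_vec. rewrite h, cross_scale_l, cross_self. vec_ring. Qed.

Lemma rodrigues_zero (s : R) (x : vec3) : s ^ 2 = 1 -> rodrigues s vzero x = x.
Proof. intro hs. unfold rodrigues. rewrite hs. vec_ring. Qed.

Lemma rodrigues_displacement (s : R) (v x : vec3) :
  s ^ 2 + dotE v v = 1 ->
  rodrigues s v x = vadd x (vscale 2 (vadd (cross v (cross v x)) (vscale s (cross v x)))).
Proof.
  intro hn. unfold rodrigues. replace (s ^ 2) with (1 - dotE v v) by lra. vec_ring.
Qed.

(* For v <> 0, the map y |-> v x y has no eigenvector orthogonal to v:
   t |y|^2 = <v x y, y> = 0 and |v|^2 |y|^2 = |v x y|^2 = t^2 |y|^2. *)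
Lemma cross_eigen_zero (v y : vec3) (t : R) :
  v <> vzero -> dotE v y = 0 -> cross v y = vscale t y -> y = vzero.
Proof.
  intros hv hperp hy. apply norm_zero.
  assert (Ht : t * dotE y y = 0).
  { rewrite <- dotE_scale_r, <- hy, dotE_comm. apply dotE_cross_r. }
  assert (Hl : dotE v v * dotE y y = t * (t * dotE y y)).
  { replace (dotE v v * dotE y y) with (dotE (cross v y) (cross v y))
      by (rewrite lagrange_identity, hperp; ring).
    rewrite hy, dotE_scale_r, dotE_comm, dotE_scale_r. ring. }
  rewrite Ht, Rmult_0_r in Hl. pose proof (norm_pos v hv). nra.
Qed.

Lemma rodrigues_fixed (s : R) (v x : vec3) :
  s ^ 2 + dotE v v = 1 -> v <> vzero -> rodrigues s v x = x <-> on_line v x.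
Proof.
  intros hn hv. rewrite rodrigues_displacement by exact hn. split.
  - intro h. apply on_line_of_cross_zero; [exact hv |].
    apply (cross_eigen_zero v _ (- s) hv); [rewrite dotE_comm; apply dotE_cross_l |].
    apply vadd_scale_zero, (vadd_scale_cancel x _ 2); [lra | exact h].
  - intros [t ->]. rewrite cross_scale_r, cross_self. vec_ring.
Qed.

Lemma conjugate_same_axis (A B h : vec3 -> vec3) (v : vec3) :
  (forall x, h (h x) = x) ->
  (forall t x, h (vscale t x) = vscale t (h x)) ->
  (forall x, A x = x <-> on_line v x) ->
  (forall x, B x = h (A (h x))) ->
  same_axis A B <-> on_line v (h v).
Proof.
  intros hinv hlin hfix hB. split.
  - intro hsame. apply hfix, hsame.
    rewrite hB, hinv. f_equal. apply hfix. exists 1. symmetry. apply vscale_1.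
  - intros [m hm] x. rewrite hB, hfix. split.
    + intros [t ->].
      assert (hAx : A (h (vscale t v)) = h (vscale t v)).
      { apply hfix. rewrite hlin, hm, vscale_vscale. eexists; reflexivity. }
      rewrite hAx. apply hinv.
    + intro hx.
      assert (hAx : A (h x) = h x) by (rewrite <- hx at 2; rewrite hinv; reflexivity).
      apply hfix in hAx. destruct hAx as [t ht].
      exists (t * m). rewrite <- (hinv x), ht, hlin, hm. apply vscale_vscale.
Qed.

(* The cross product c x b lies on R a when a is orthogonal to b and c
   (case (iii)), or when b and c span the same line (case (i)). *)
Lemma perp_both_cross_on_line (a b c : vec3) :
  on_S2 a -> dotE a b = 0 -> dotE a c = 0 -> on_line a (cross c b).
Proof.
  intros ha h1 h2. apply on_line_of_cross_zero; [apply unit_nonzero, ha |].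
  rewrite cross_cross, h1, h2. vec_ring.
Qed.

Lemma same_line_cross_on_line (a b c : vec3) :
  on_S2 b -> on_S2 c -> same_line b c -> on_line a (cross c b).
Proof.
  intros hb hc hl. exists 0.
  rewrite (proj1 (same_line_iff_cross b c (unit_nonzero _ hb) (unit_nonzero _ hc)) hl).
  vec_ring.
Qed.

Section ThreeHalfTurns.

Variables alpha beta gamma : vec3.
Hypotheses (ha : on_S2 alpha) (hb : on_S2 beta) (hc : on_S2 gamma).

Let A (x : vec3) : vec3 := halfturn gamma (halfturn beta (halfturn alpha x)).
Let v : vec3 := quat_vec alpha beta gamma.

Lemma three_halfturns_rodrigues (x : vec3) : A x = rodrigues (det3 alpha beta gamma) v x.
Proof. unfold A, v. rewrite !halfturn_hom_unit by assumption. apply halfturn_hom_triple. Qed.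

Lemma three_halfturns_norm : det3 alpha beta gamma ^ 2 + dotE v v = 1.
Proof. unfold v. rewrite quat_norm, ha, hb, hc. ring. Qed.

Lemma three_halfturns_nontrivial : (exists x, A x <> x) -> v <> vzero.
Proof.
  intros [x hx] hv. apply hx. rewrite three_halfturns_rodrigues, hv.
  apply rodrigues_zero. pose proof three_halfturns_norm as hn.
  rewrite hv in hn. unfold dotE, vzero in hn; simpl in hn. lra.
Qed.

Lemma three_halfturns_fixed (x : vec3) : v <> vzero -> A x = x <-> on_line v x.
Proof.
  intro hv. rewrite three_halfturns_rodrigues.
  apply rodrigues_fixed; [apply three_halfturns_norm | exact hv].
Qed.

Lemma three_halfturns_det : v <> vzero -> det3 alpha beta gamma ^ 2 <> 1.
Proof. intro hv. pose proof three_halfturns_norm. pose proof (norm_pos v hv). lra. Qed.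

(* B = R_alpha o A o R_alpha, so A and B share their axis iff R_alpha
   preserves R v, which unfolds to the condition on alpha, beta, gamma. *)
Lemma same_axis_three_halfturns :
  v <> vzero ->
  same_axis A (fun x => halfturn alpha (halfturn gamma (halfturn beta x))) <->
  dotE gamma beta = 0 \/ on_line alpha (cross gamma beta).
Proof.
  intro hv.
  rewrite (conjugate_same_axis _ _ (halfturn alpha) v).
  - rewrite (halfturn_stable_line alpha v ha hv).
    unfold v. rewrite dotE_quat_vec, cross_quat_vec, ha.
    split; intros [h | h].
    + left; lra.
    + right. exists (dotE alpha (cross gamma beta)).
      rewrite vscale_1 in h. apply vadd_scale_zero in h. rewrite Ropp_involutive in h. exact h.
    + left; lra.
    + right. destruct h as [k hk]. rewrite hk, dotE_scale_r, ha. vec_ring.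
  - intro x. apply halfturn_involutive, ha.
  - intros t x. apply halfturn_scale.
  - intro x. apply three_halfturns_fixed, hv.
  - intro x. unfold A. rewrite halfturn_involutive by exact ha. reflexivity.
Qed.

(* The condition of [same_axis_three_halfturns] is (i) \/ (ii) \/ (iii):
   if gamma x beta = k alpha with k <> 0, then alpha is orthogonal to beta
   and gamma; if k = 0, beta and gamma span the same line. *)
Lemma axis_condition_cases :
  det3 alpha beta gamma ^ 2 <> 1 ->
  (dotE gamma beta = 0 \/ on_line alpha (cross gamma beta)) <->
  same_line beta gamma
  \/ (dotE gamma beta = 0 /\ det3 alpha beta gamma ^ 2 <> 1)
  \/ (dotE alpha beta = 0 /\ dotE alpha gamma = 0 /\ dotE gamma beta <> 0).
Proof.
  intro hdet. split.
  - intros [h0 | [k hk]]; [right; left; split; assumption |].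
    destruct (Req_dec (dotE gamma beta) 0) as [h0 | h0]; [right; left; split; assumption |].
    destruct (Req_dec k 0) as [-> | hk0].
    + left. apply same_line_iff_cross; try (apply unit_nonzero; assumption).
      rewrite hk. vec_ring.
    + right; right. split; [| split; [| exact h0]].
      * pose proof (dotE_cross_r gamma beta) as e.
        rewrite hk, dotE_comm, dotE_scale_r, dotE_comm in e.
        destruct (Rmult_integral _ _ e); [contradiction | assumption].
      * pose proof (dotE_cross_l gamma beta) as e.
        rewrite hk, dotE_comm, dotE_scale_r, dotE_comm in e.
        destruct (Rmult_integral _ _ e); [contradiction | assumption].
  - intros [h | [[h0 _] | [h1 [h2 _]]]].
    + right. apply same_line_cross_on_line; assumption.
    + left; exact h0.
    + right. apply perp_both_cross_on_line; assumption.
Qed.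


(* Points of the axis, when gamma x beta is parallel to alpha (cases (i)
   and (iii)): then v is parallel to alpha, so the axis is R alpha. *)
Lemma axis_point_on_alpha_line (b : vec3) :
  on_line v b -> on_line alpha (cross gamma beta) -> on_line alpha b.
Proof.
  intros hbv [k hk]. apply (on_line_trans alpha v b); [| exact hbv].
  exists (- dotE gamma beta). exact (quat_vec_parallel _ _ _ k hk).
Qed.

Lemma axis_point_on_alpha (b : vec3) :
  on_S2 b -> on_line v b -> on_line alpha (cross gamma beta) ->
  b = halfturn alpha b /\ (b = alpha \/ b = vopp alpha).
Proof.
  intros hb1 hbv hpar. pose proof (axis_point_on_alpha_line b hbv hpar) as hab.
  split.
  - symmetry. apply halfturn_on_axis; assumption.
  - apply unit_on_line; assumption.
Qed.

Lemma axis_point_gamma (b : vec3) :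
  dotE alpha gamma = 0 -> on_line v b -> on_line alpha (cross gamma beta) ->
  vopp (halfturn gamma b) = b.
Proof.
  intros h2 hbv hpar. destruct (axis_point_on_alpha_line b hbv hpar) as [t ->].
  rewrite halfturn_perp; [apply vopp_vopp |].
  rewrite dotE_scale_r, dotE_comm, h2. ring.
Qed.

(* Points of the axis in case (ii): they are orthogonal to alpha, since
   <alpha, v> = -<gamma,beta> = 0. *)
Lemma axis_point_perp (b : vec3) :
  dotE gamma beta = 0 -> on_line v b -> halfturn alpha b = vopp b.
Proof.
  intros h0 [t ->]. apply halfturn_perp.
  unfold v. rewrite dotE_scale_r, dotE_quat_vec, h0. ring.
Qed.

End ThreeHalfTurns.

Theorem mainTheorem6 (alpha beta gamma : vec3)
  (ha : on_S2 alpha) (hb : on_S2 beta) (hc : on_S2 gamma)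
  (hA : exists x, halfturn gamma (halfturn beta (halfturn alpha x)) <> x) :
  let A := fun x => halfturn gamma (halfturn beta (halfturn alpha x)) in
  let B := fun x => halfturn alpha (halfturn gamma (halfturn beta x)) in
  let case_i := same_line beta gamma in
  let case_ii := dotE gamma beta = 0 /\ (det3 alpha beta gamma) ^ 2 <> 1 in
  let case_iii := dotE alpha beta = 0 /\ dotE alpha gamma = 0
                  /\ dotE gamma beta <> 0 in
  (same_axis A B <-> case_i \/ case_ii \/ case_iii) /\
  (forall b : vec3, on_S2 b -> A b = b ->
     let c := halfturn alpha b in
     let a := halfturn gamma b in
     (case_i -> b = c /\ (b = alpha \/ b = vopp alpha)) /\
     (case_ii -> c = vopp b) /\
     (case_iii -> vopp a = b /\ b = c /\ (b = alpha \/ b = vopp alpha))).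
Proof.
  intros A B case_i case_ii case_iii.
  pose proof (three_halfturns_nontrivial alpha beta gamma ha hb hc hA) as hv.
  split.
  - etransitivity; [exact (same_axis_three_halfturns alpha beta gamma ha hb hc hv) |].
    apply axis_condition_cases; try assumption.
    apply three_halfturns_det; assumption.
  - intros b hb1 hAb c a.
    apply (three_halfturns_fixed alpha beta gamma ha hb hc b hv) in hAb.
    split; [| split].
    + intro hi. apply (axis_point_on_alpha alpha beta gamma ha b hb1 hAb).
      apply same_line_cross_on_line; assumption.
    + intros [h0 _]. exact (axis_point_perp alpha beta gamma b h0 hAb).
    + intros [h1 [h2 _]].
      pose proof (perp_both_cross_on_line _ _ _ ha h1 h2) as hpar.
      split; [exact (axis_point_gamma alpha beta gamma b h2 hAb hpar) |].
      exact (axis_point_on_alpha alpha beta gamma ha b hb1 hAb hpar).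
Qed.
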